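(* Let $\alpha=2.06$, $a=0.19$, $b=0.5095$, and $f^+(x)=0$ for $x<a$, $f^+(x)=\left(\frac{x-a}{b-a}\right)^2$ for $x\in[a,b]$, $f^+(x)=1$ for $x>b$. Define \[ \mathcal{C}_{++-}(x,y,z)=\alpha\big(1+x+y-z-yzf^+(x)-xzf^+(y)-(1-z)f^+(x)f^+(y)\big)-\big(1+2z-2zf^+(x)-2zf^+(y)+f^+(x)f^+(y)\big). \] Then $\mathcal{C}_{++-}(x,y,z)\ge 0$ for all $x,y,z\in[0,1]$ satisfying the triangle inequalities $x\le y+z$, $y\le x+z$, $z\le x+y$.
   Context: $\mathcal{C}_{++-}(x,y,z)$ equals $\alpha LP(uvw)-ALG(uvw)$ for a triangle with two positive edges of lengths $x,y$ and one negative edge of length $z$ in the pivot rounding algorithm for correlation clustering on complete graphs, with positive edges cut with probability $f^+$ of their length and negative edges with probability $f^-(z)=z$. *)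

From Stdlib Require Import Reals Lra.
Open Scope R_scope.

Definition alpha : R := 206 / 100.
Definition a_par : R := 19 / 100.
Definition b_par : R := 5095 / 10000.

Definition fplus (x : R) : R :=
  if Rlt_dec x a_par then 0
  else if Rle_dec x b_par then ((x - a_par) / (b_par - a_par)) ^ 2
  else 1.

Definition C_ppm (x y z : R) : R :=
  alpha * (1 + x + y - z - y * z * fplus x - x * z * fplus y
           - (1 - z) * fplus x * fplus y)
  - (1 + 2 * z - 2 * z * fplus x - 2 * z * fplus y + fplus x * fplus y).

From Stdlib Require Import Reals Lra Psatz.
Open Scope R_scope.

(** For fixed [x], [y] the cost is affine in [z], and the triangle inequalities
    confine [z] to [[|x - y|, min 1 (x + y)]]; swapping [x] and [y] we may take
    [x <= y], so it suffices to check the edges [z = y - x], [z = x + y] (when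
    [x + y <= 1]) and [z = 1] (when [x + y >= 1]).  On each edge we split on the
    three regimes of [f^+]; in the middle one we write [x = a + (b - a) s], so
    that [f^+ x = s^2] and every case becomes a polynomial inequality on a box.
    The two cases where both points lie in the middle regime are concave
    quadratics in the product of the parameters, once their sum is fixed; they
    are checked at the extreme values of the product, where they reduce to
    univariate polynomials certified by Bernstein expansions. *)

Definition C_ppm_uv (x y z u v : R) : R :=
  alpha * (1 + x + y - z - y * z * u - x * z * v - (1 - z) * u * v)
  - (1 + 2 * z - 2 * z * u - 2 * z * v + u * v).

Lemma C_ppm_fplus x y z : C_ppm x y z = C_ppm_uv x y z (fplus x) (fplus y).
Proof. reflexivity. Qed.

Lemma C_ppm_uv_sym x y z u v : C_ppm_uv x y z u v = C_ppm_uv y x z v u.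
Proof. unfold C_ppm_uv; ring. Qed.

Lemma concave_quad_nonneg_between (q : R -> R) c0 c1 K y0 y1 y :
  (forall t, q t = c0 + c1 * t - K * t ^ 2) -> 0 <= K -> y0 <= y <= y1 ->
  0 <= q y0 -> 0 <= q y1 -> 0 <= q y.
Proof.
  intros Hq HK Hy H0 H1.
  destruct (Req_dec y0 y1) as [<- | Hne]; [now replace y with y0 by lra|].
  apply (Rmult_le_reg_l (y1 - y0)); [lra|]; rewrite Rmult_0_r.
  replace ((y1 - y0) * q y)
    with ((y1 - y) * q y0 + (y - y0) * q y1 + K * ((y - y0) * (y1 - y)) * (y1 - y0))
    by (rewrite !Hq; ring).
  assert (0 <= (y - y0) * (y1 - y)) by nra.
  repeat apply Rplus_le_le_0_compat; repeat apply Rmult_le_pos; lra.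
Qed.

Lemma C_ppm_uv_between_z x y u v z0 z1 z : z0 <= z <= z1 ->
  0 <= C_ppm_uv x y z0 u v -> 0 <= C_ppm_uv x y z1 u v -> 0 <= C_ppm_uv x y z u v.
Proof.
  apply (concave_quad_nonneg_between (fun t => C_ppm_uv x y t u v)
    (C_ppm_uv x y 0 u v) (C_ppm_uv x y 1 u v - C_ppm_uv x y 0 u v) 0);
    [intro t; unfold C_ppm_uv; ring | lra].
Qed.

(* [19/100 = a], [5095/10000 = b] and [3195/10000 = b - a]. *)
Lemma fplus_cases x :
  (x < 19/100 /\ fplus x = 0) \/
  (exists s, 0 <= s <= 1 /\ x = 19/100 + 3195/10000 * s /\ fplus x = s ^ 2) \/
  (5095/10000 < x /\ fplus x = 1).
Proof.
  unfold fplus, a_par, b_par.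
  destruct (Rlt_dec x (19/100)) as [Hlo | Hlo]; [now left|].
  destruct (Rle_dec x (5095/10000)) as [Hhi | Hhi]; [|now right; right; split; lra].
  right; left; exists ((x - 19/100) / (5095/10000 - 19/100)).
  repeat split; [lra | lra | field].
Qed.

Lemma fplus_bounds x : 0 <= fplus x <= 1.
Proof.
  destruct (fplus_cases x) as [[_ ->] | [[s [Hs [_ ->]]] | [_ ->]]]; nra.
Qed.

Ltac case_fplus x y :=
  destruct (fplus_cases x) as [[?Hx ?Ex] | [[?s [?Hs [?Xs ?Ex]]] | [?Hx ?Ex]]];
  destruct (fplus_cases y) as [[?Hy ?Ey] | [[?t [?Ht [?Yt ?Ey]]] | [?Hy ?Ey]]];
  rewrite ?Ex, ?Ey.

(* Adds the degree-[n] Bernstein basis of [[l, h]] in [g] as nonnegative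
   hypotheses: [lra] then certifies any polynomial of degree [n] whose
   Bernstein coefficients are nonnegative. *)
Ltac bernstein_basis l h n g :=
  let rec go i :=
    match i with
    | O => assert (0 <= (h - g) ^ n) by (apply pow_le; lra)
    | S ?j => assert (0 <= (g - l) ^ i * (h - g) ^ (n - i))
                by (apply Rmult_le_pos; apply pow_le; lra); go j
    end in
  go n.

Lemma C_sub_low_low x y : 0 <= x <= y -> y < 19/100 -> 0 <= C_ppm_uv x y (y - x) 0 0.
Proof. unfold C_ppm_uv, alpha; intros; nra. Qed.

Lemma C_sub_low_mid x y t : 0 <= x < 19/100 -> 0 <= t <= 1 ->
  y = 19/100 + 3195/10000 * t -> 0 <= C_ppm_uv x y (y - x) 0 (t ^ 2).
Proof.
  unfold C_ppm_uv, alpha; intros Hx Ht ->.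
  assert (0 <= (19/100 + 3195/10000 * t - x) * t ^ 2 * (2 - 206/100 * x))
    by (apply Rmult_le_pos; [apply Rmult_le_pos|]; nra).
  nra.
Qed.

Lemma C_sub_low_high x y : 0 <= x < 19/100 -> 5095/10000 < y <= 1 ->
  0 <= C_ppm_uv x y (y - x) 0 1.
Proof. unfold C_ppm_uv, alpha; intros; nra. Qed.

Lemma C_sub_mid_mid x y s t : 0 <= s <= t -> t <= 1 ->
  x = 19/100 + 3195/10000 * s -> y = 19/100 + 3195/10000 * t ->
  0 <= C_ppm_uv x y (y - x) (s ^ 2) (t ^ 2).
Proof.
  unfold C_ppm_uv, alpha; intros Hs Ht -> ->.
  assert (0 <= s ^ 2 <= 1) by nra.
  assert (0 <= t ^ 2 <= 1) by nra.
  assert (0 <= s ^ 2 * t ^ 2 <= s ^ 2) by nra.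
  assert (0 <= (t - s) * s ^ 2 * (2 - 206/100 * (19/100 + 3195/10000 * t)))
    by (apply Rmult_le_pos; nra).
  assert (0 <= (t - s) * t ^ 2 * (2 - 206/100 * (19/100 + 3195/10000 * s)))
    by (apply Rmult_le_pos; nra).
  assert (0 <= (t - s) * (s ^ 2 * t ^ 2)) by nra.
  assert (0 <= s * (1 - s)) by nra.
  nra.
Qed.

Lemma C_sub_mid_high x y s : 0 <= s <= 1 -> 5095/10000 < y <= 1 ->
  x = 19/100 + 3195/10000 * s -> 0 <= C_ppm_uv x y (y - x) (s ^ 2) 1.
Proof.
  unfold C_ppm_uv, alpha; intros Hs Hy ->.
  assert (0 <= s ^ 2 <= 1) by nra.
  assert (0 <= (y - 5095/10000) * (1 - y)) by nra.
  assert (0 <= (y - 5095/10000) * s ^ 2) by nra.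
  assert (0 <= (1 - s) * s ^ 2) by nra.
  assert (0 <= (1 - s) * s) by nra.
  assert (0 <= (y - 5095/10000) * (1 - y) * s ^ 2) by nra.
  assert (0 <= (1 - s) * (y - 5095/10000)) by nra.
  nra.
Qed.

Lemma C_sub_high_high x y : 5095/10000 < x <= y -> y <= 1 ->
  0 <= C_ppm_uv x y (y - x) 1 1.
Proof. unfold C_ppm_uv, alpha; intros; nra. Qed.

Lemma C_add_low_low x y : 0 <= x <= y -> y < 19/100 -> 0 <= C_ppm_uv x y (x + y) 0 0.
Proof. unfold C_ppm_uv, alpha; intros; nra. Qed.

Lemma C_add_low_high x y : 0 <= x < 19/100 -> 5095/10000 < y -> x + y <= 1 ->
  0 <= C_ppm_uv x y (x + y) 0 1.
Proof. unfold C_ppm_uv, alpha; intros; nra. Qed.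

(* Concave in [x], hence checked at [x = 0] and [x = a]. *)
Lemma C_add_low_mid x y t : 0 <= x < 19/100 -> 0 <= t <= 1 ->
  y = 19/100 + 3195/10000 * t -> 0 <= C_ppm_uv x y (x + y) 0 (t ^ 2).
Proof.
  intros Hx Ht Hy.
  apply (concave_quad_nonneg_between (fun x => C_ppm_uv x y (x + y) 0 (t ^ 2))
    (alpha - 1 - 2 * y + 2 * y * t ^ 2) (2 * t ^ 2 - 2 - alpha * y * t ^ 2)
    (alpha * t ^ 2) 0 (19/100));
    [intro; unfold C_ppm_uv; ring | unfold alpha; nra | lra | |];
    unfold C_ppm_uv, alpha; subst y.
  - nra.
  - assert (0 <= (t - 52/100) ^ 2) by apply pow2_ge_0.
    assert (0 <= t ^ 3) by (apply pow_le; lra).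
    nra.
Qed.

(* The cost on the edge [z = x + y] with [x = a + (b - a) s], [y = a + (b - a) t],
   as a function of [g = s + t] and [m = s t].  The constraint [x + y <= 1] reads
   [g <= 1240/639]; the diagonal [s = t] is [m = g^2/4], and the sides [s = 0],
   [s = 1] are [m = 0], [m = g - 1]. *)
Definition C_add_mid (g m : R) : R :=
  3/10 - 2 * (3195/10000) * g
  + (2 * (19/100) + 3195/10000 * g)
    * ((2 - 206/100 * (19/100)) * (g ^ 2 - 2 * m) - 206/100 * (3195/10000) * g * m)
  - (206/100 * (1 - (2 * (19/100) + 3195/10000 * g)) + 1) * m ^ 2.

Lemma C_add_mid_diag_small g : 0 <= g <= 97/100 -> 0 <= C_add_mid g (g ^ 2 / 4).
Proof. intros; unfold C_add_mid; bernstein_basis 0 (97/100) 5%nat g; simpl in *; lra. Qed.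

Lemma C_add_mid_diag_large g : 97/100 <= g <= 1240/639 -> 0 <= C_add_mid g (g ^ 2 / 4).
Proof.
  intros; unfold C_add_mid; bernstein_basis (97/100) (1240/639) 5%nat g; simpl in *; lra.
Qed.

(* Split at [97/100] so that the Bernstein coefficients are nonnegative on each piece. *)
Lemma C_add_mid_diag g : 0 <= g <= 1240/639 -> 0 <= C_add_mid g (g ^ 2 / 4).
Proof.
  intros; destruct (Rle_or_lt g (97/100));
    [apply C_add_mid_diag_small | apply C_add_mid_diag_large]; lra.
Qed.

Lemma C_add_mid_side0 g : 0 <= g <= 1 -> 0 <= C_add_mid g 0.
Proof. intros; unfold C_add_mid; bernstein_basis 0 1 5%nat g; simpl in *; lra. Qed.

Lemma C_add_mid_side1 g : 1 <= g <= 1240/639 -> 0 <= C_add_mid g (g - 1).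
Proof.
  intros; unfold C_add_mid; bernstein_basis 1 (1240/639) 5%nat g; simpl in *; lra.
Qed.

Lemma C_add_mid_between g m0 m1 m : m0 <= m <= m1 -> 0 <= g <= 1240/639 ->
  0 <= C_add_mid g m0 -> 0 <= C_add_mid g m1 -> 0 <= C_add_mid g m.
Proof.
  intros Hm Hg.
  apply (concave_quad_nonneg_between (C_add_mid g)
    (3/10 - 2 * (3195/10000) * g
      + (2 * (19/100) + 3195/10000 * g) * (2 - 206/100 * (19/100)) * g ^ 2)
    (- (2 * (19/100) + 3195/10000 * g)
       * (2 * (2 - 206/100 * (19/100)) + 206/100 * (3195/10000) * g))
    (206/100 * (1 - (2 * (19/100) + 3195/10000 * g)) + 1));
    [intro; unfold C_add_mid; ring | lra | lra].
Qed.

Lemma C_add_mid_mid x y s t : 0 <= s <= 1 -> 0 <= t <= 1 ->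
  x = 19/100 + 3195/10000 * s -> y = 19/100 + 3195/10000 * t -> x + y <= 1 ->
  0 <= C_ppm_uv x y (x + y) (s ^ 2) (t ^ 2).
Proof.
  intros Hs Ht Hx Hy Hxy.
  replace (C_ppm_uv x y (x + y) (s ^ 2) (t ^ 2)) with (C_add_mid (s + t) (s * t))
    by (subst; unfold C_ppm_uv, C_add_mid, alpha; field).
  assert (Hg : 0 <= s + t <= 1240/639) by (subst; lra).
  assert (Hdiag : s * t <= (s + t) ^ 2 / 4) by (pose proof (pow2_ge_0 (s - t)); lra).
  destruct (Rle_or_lt (s + t) 1).
  - apply (C_add_mid_between _ 0 ((s + t) ^ 2 / 4)); [nra | lra | |].
    + apply C_add_mid_side0; lra.
    + apply C_add_mid_diag; lra.
  - apply (C_add_mid_between _ (s + t - 1) ((s + t) ^ 2 / 4)); [nra | lra | |].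
    + apply C_add_mid_side1; lra.
    + apply C_add_mid_diag; lra.
Qed.

(* Concave in [y], hence checked at [y = b] and [y = 1 - x]. *)
Lemma C_add_mid_high x y s : 0 <= s <= 1 -> x = 19/100 + 3195/10000 * s ->
  5095/10000 < y -> x + y <= 1 -> 0 <= C_ppm_uv x y (x + y) (s ^ 2) 1.
Proof.
  intros Hs Hx Hy Hxy.
  apply (concave_quad_nonneg_between (fun y => C_ppm_uv x y (x + y) (s ^ 2) 1)
    (alpha - 1 - alpha * x ^ 2 + s ^ 2 * (x * (2 + alpha) - alpha - 1))
    (- alpha * x + s ^ 2 * (2 + alpha - alpha * x)) (alpha * s ^ 2)
    (5095/10000) (1 - x));
    [intro; unfold C_ppm_uv; ring | unfold alpha; nra | lra | |].
  - replace (C_ppm_uv x (5095/10000) (x + 5095/10000) (s ^ 2) 1) with (C_add_mid (s + 1) s)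
      by (subst; unfold C_ppm_uv, C_add_mid, alpha; field).
    replace s with (s + 1 - 1) at 2 by ring.
    apply C_add_mid_side1; subst; lra.
  - replace (x + (1 - x)) with 1 by ring.
    unfold C_ppm_uv, alpha.
    assert (0 <= s ^ 2 <= 1) by nra.
    assert (0 <= (1 - s ^ 2) * (206/100 * (1 - x) - 1)) by (apply Rmult_le_pos; lra).
    nra.
Qed.

Lemma C_one_high x y u : 0 <= x -> 5095/10000 < y <= 1 -> 0 <= u <= 1 ->
  0 <= C_ppm_uv x y 1 u 1.
Proof. unfold C_ppm_uv, alpha; intros; nra. Qed.

(* The cost on the edge [z = 1] with [x = a + (b - a) s], [y = a + (b - a) t],
   as a function of [g = (1 - s) + (1 - t)] and [m = (1 - s) (1 - t)]; the
   constraint [x + y >= 1] reads [g <= 38/639]. *)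
Definition C_one_mid (g m : R) : R :=
  (206/100 * (5095/10000) - 1) * (2 * g - g ^ 2)
  - m * (4 * (206/100 * (3195/10000)) + 6 - 2 * (206/100 * (5095/10000))
         - (206/100 * (3195/10000) + 2) * g + m).

Lemma C_one_mid_diag g : 0 <= g <= 38/639 -> 0 <= C_one_mid g (g ^ 2 / 4).
Proof. intros; unfold C_one_mid; bernstein_basis 0 (38/639) 4%nat g; simpl in *; lra. Qed.

Lemma C_one_mid_mid x y s t : 0 <= s <= 1 -> 0 <= t <= 1 ->
  x = 19/100 + 3195/10000 * s -> y = 19/100 + 3195/10000 * t -> 1 <= x + y ->
  0 <= C_ppm_uv x y 1 (s ^ 2) (t ^ 2).
Proof.
  intros Hs Ht Hx Hy Hxy.
  set (g := (1 - s) + (1 - t)).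
  replace (C_ppm_uv x y 1 (s ^ 2) (t ^ 2)) with (C_one_mid g ((1 - s) * (1 - t)))
    by (subst; unfold g, C_ppm_uv, C_one_mid, alpha; field).
  assert (Hg : 0 <= g <= 38/639) by (subst; unfold g; lra).
  apply (concave_quad_nonneg_between (C_one_mid g)
    ((206/100 * (5095/10000) - 1) * (2 * g - g ^ 2))
    (- (4 * (206/100 * (3195/10000)) + 6 - 2 * (206/100 * (5095/10000))
        - (206/100 * (3195/10000) + 2) * g)) 1 0 (g ^ 2 / 4));
    [intro; unfold C_one_mid; ring | lra | | |].
  - pose proof (pow2_ge_0 (s - t)); unfold g; split; nra.
  - unfold C_one_mid; nra.
  - now apply C_one_mid_diag.
Qed.

Lemma C_ppm_sub_edge x y : 0 <= x <= y -> y <= 1 -> 0 <= C_ppm x y (y - x).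
Proof.
  intros Hxy Hy; rewrite C_ppm_fplus; case_fplus x y; try (subst; lra).
  - apply C_sub_low_low; lra.
  - apply (C_sub_low_mid x y t); lra.
  - apply C_sub_low_high; lra.
  - apply (C_sub_mid_mid x y s t); subst; lra.
  - apply (C_sub_mid_high x y s); lra.
  - apply C_sub_high_high; lra.
Qed.

Lemma C_ppm_add_edge x y : 0 <= x <= y -> x + y <= 1 -> 0 <= C_ppm x y (x + y).
Proof.
  intros Hxy Hsum; rewrite C_ppm_fplus; case_fplus x y; try (subst; lra).
  - apply C_add_low_low; lra.
  - apply (C_add_low_mid x y t); lra.
  - apply C_add_low_high; lra.
  - apply (C_add_mid_mid x y s t); assumption.
  - apply (C_add_mid_high x y s); assumption.
Qed.

Lemma C_ppm_one_edge x y : 0 <= x <= y -> y <= 1 -> 1 <= x + y -> 0 <= C_ppm x y 1.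
Proof.
  intros Hxy Hy H1; rewrite C_ppm_fplus; pose proof (fplus_bounds x).
  case_fplus x y; try (subst; lra).
  - apply C_one_high; lra.
  - apply (C_one_mid_mid x y s t); assumption.
  - apply C_one_high; lra.
  - apply C_one_high; lra.
Qed.

Lemma C_ppm_nonneg_le x y z : 0 <= x <= y -> y <= 1 -> 0 <= z <= 1 ->
  y <= x + z -> z <= x + y -> 0 <= C_ppm x y z.
Proof.
  intros Hxy Hy Hz Hyz Hzxy.
  rewrite C_ppm_fplus; pose proof (C_ppm_sub_edge x y Hxy Hy) as Hsub.
  destruct (Rle_or_lt (x + y) 1) as [Hle | Hgt].
  - apply (C_ppm_uv_between_z _ _ _ _ (y - x) (x + y)); [lra | exact Hsub |].
    exact (C_ppm_add_edge x y Hxy Hle).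
  - apply (C_ppm_uv_between_z _ _ _ _ (y - x) 1); [lra | exact Hsub |].
    apply C_ppm_one_edge; lra.
Qed.

Theorem lemma14 (x y z : R) :
  0 <= x <= 1 -> 0 <= y <= 1 -> 0 <= z <= 1 ->
  x <= y + z -> y <= x + z -> z <= x + y ->
  0 <= C_ppm x y z.
Proof.
  intros Hx Hy Hz Hxyz Hyxz Hzxy.
  destruct (Rle_or_lt x y).
  - apply C_ppm_nonneg_le; lra.
  - rewrite C_ppm_fplus, C_ppm_uv_sym, <- C_ppm_fplus.
    apply C_ppm_nonneg_le; lra.
Qed.
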